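(* Let $P\in N_1$ be a sum of $4$ monomials, not necessarily distinct (i.e. $P(1)=4$). Then $P$ has unique factorisation inside $N_1$: any two factorisations of $P$ into irreducible elements of $N_1$ coincide up to the order of the factors.
   Context: $N_1=\mathbb{Z}_{\ge0}[X]$ is the semiring of univariate polynomials with nonnegative integer coefficients. An element $Q\neq0,1$ of $N_1$ is irreducible if in every factorisation $Q=ST$ with $S,T\in N_1$ one of $S,T$ is $1$. *)

From HB Require Import structures.
From mathcomp Require Import all_boot all_algebra.
Set Implicit Arguments. Unset Strict Implicit. Unset Printing Implicit Defensive.
Import GRing.Theory.
Local Open Scope ring_scope.

(* N_1 = Z_{>=0}[X] is represented by {poly nat} (nat is a semiring in mathcomp). *)

Definition N1_irreducible (Q : {poly nat}) : Prop :=
  Q <> 0 /\ Q <> 1 /\ forall S T : {poly nat}, Q = S * T -> S = 1 \/ T = 1.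

Definition N1_irr_factorisation (P : {poly nat}) (s : seq {poly nat}) : Prop :=
  (forall q, q \in s -> N1_irreducible q) /\ \prod_(q <- s) q = P.

From mathcomp Require Import all_boot all_algebra zify.
Import GRing.Theory.
Local Open Scope ring_scope.

(* Evaluation at 1 is multiplicative, and a polynomial of value 1 is a
   monomial, so every irreducible factor other than X has value at least 2.
   Hence a factorisation of P is X^m times at most two further factors, where
   m is the X-adic valuation of P. If there are two, both have value 2 and a
   nonzero constant term, i.e. are of the form 1 + X^a; and the product
   (1 + X^a)(1 + X^b) determines {a, b}, because its coefficients count the
   exponents 0, a, b, a + b with multiplicity. *)

Lemma horner1_eq0 (Q : {poly nat}) : Q.[1%N] = 0%N -> Q = 0.
Proof.
elim/poly_ind: Q => [|p c IH]; first by rewrite horner0.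
rewrite hornerMXaddC mulr1 => Q1.
have [p1 -> ] : p.[1%N] = 0%N /\ c = 0%N by lia.
by rewrite IH // mul0r add0r.
Qed.

Lemma horner1_eq1 (Q : {poly nat}) : Q.[1%N] = 1%N -> exists k, Q = 'X^k.
Proof.
elim/poly_ind: Q => [|p c IH]; first by rewrite horner0.
rewrite hornerMXaddC mulr1 => Q1.
have [[/horner1_eq0 -> ->]|[/IH [k ->] ->]] :
    (p.[1%N] = 0%N /\ c = 1%N) \/ (p.[1%N] = 1%N /\ c = 0%N) by lia.
- by exists 0%N; rewrite mul0r add0r.
- by exists k.+1; rewrite addr0 exprSr.
Qed.

Lemma horner1_eq2 (Q : {poly nat}) :
  Q.[1%N] = 2%N -> exists j k, Q = 'X^j + 'X^k.
Proof.
elim/poly_ind: Q => [|p c IH]; first by rewrite horner0.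
rewrite hornerMXaddC mulr1 => Q2.
have [[/horner1_eq0 -> ->]|[[/horner1_eq1 [k ->] ->]|[/IH [j [k ->]] ->]]] :
    (p.[1%N] = 0%N /\ c = 2%N) \/ (p.[1%N] = 1%N /\ c = 1%N)
    \/ (p.[1%N] = 2%N /\ c = 0%N) by lia.
- by exists 0%N, 0%N; rewrite mul0r add0r expr0 -polyC1 -polyCD.
- by exists k.+1, 0%N; rewrite exprSr.
- by exists j.+1, k.+1; rewrite addr0 !exprSr mulrDl.
Qed.

Lemma horner1_one : (1 : {poly nat}).[1%N] = 1%N.
Proof. by rewrite -polyC1 hornerC. Qed.

Lemma Xn_neq1 k : ('X^(k.+1) : {poly nat}) <> 1.
Proof. by move=> Xk1; move: (coefXn nat k.+1 0); rewrite Xk1 coef1. Qed.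

Lemma poly_X_coef0 (Q : {poly nat}) : Q = drop_poly 1 Q * 'X + (Q`_0)%:P.
Proof.
rewrite -{1}(poly_take_drop 1 Q) addrC; congr (_ + _).
by apply/polyP => i; rewrite coef_take_poly coefC ltnS leqn0; case: eqP => [->|].
Qed.

Section Irreducible.

Context {Q : {poly nat}}.
Hypothesis irrQ : N1_irreducible Q.

Lemma N1_irreducible_horner1_neq0 : Q.[1%N] <> 0%N.
Proof. by case: irrQ => Q0 _ /horner1_eq0. Qed.

Lemma N1_irreducible_horner1_eq1 : Q.[1%N] = 1%N -> Q = 'X.
Proof.
case: irrQ => _ [Q1 irr] /horner1_eq1 [[|k] EQ]; first by rewrite EQ in Q1.
have [k0|] := irr _ _ (etrans EQ (exprSr _ k)); last by move/(Xn_neq1 0).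
by rewrite EQ exprSr k0 mul1r.
Qed.

Lemma N1_irreducible_coef0 : Q <> 'X -> Q`_0 <> 0%N.
Proof.
case: irrQ => _ [_ irr] QX Q00.
have := poly_X_coef0 Q; rewrite Q00 addr0 => /irr [Q' | ]; last by move/(Xn_neq1 0).
by apply: QX; rewrite (poly_X_coef0 Q) Q' Q00 addr0 mul1r.
Qed.

Lemma N1_irreducible_horner1_ge2 : Q <> 'X -> (2 <= Q.[1%N])%N.
Proof.
move=> QX; have := N1_irreducible_horner1_neq0.
by case EQ: (Q.[1%N]) => [|[|n]] // _; case: QX; apply: N1_irreducible_horner1_eq1.
Qed.

Lemma N1_irreducible_horner1_eq2 : Q <> 'X -> Q.[1%N] = 2%N -> exists a, Q = 1 + 'X^a.
Proof.
move=> QX /horner1_eq2 [j [k EQ]]; have := N1_irreducible_coef0 QX.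
rewrite EQ coefD !coefXn.
case: j EQ => [|j] EQ; first by exists k.
by case: k EQ => [|k] EQ //; exists j.+1; rewrite addrC.
Qed.

End Irreducible.

Lemma one_addXn_neq1 a : (1 + 'X^a : {poly nat}) <> 1.
Proof. by move/(congr1 (horner^~ 1%N)); rewrite hornerD hornerXn expr1n horner1_one. Qed.

Lemma eq_XnM {m n} {R R' : {poly nat}} : R`_0 <> 0%N -> R'`_0 <> 0%N ->
  'X^m * R = 'X^n * R' -> m = n /\ R = R'.
Proof.
move=> R0 R'0 E; have coefE i : ('X^m * R)`_i = ('X^n * R')`_i by rewrite E.
have mn : m = n.
  case: (ltngtP m n) => // [lt_mn|lt_nm].
  - by move: (coefE m); rewrite !coefXnM ltnn lt_mn subnn => /R0.
  - by move: (coefE n); rewrite !coefXnM ltnn lt_nm subnn => /esym /R'0.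
split=> //; apply/polyP => i; move: (coefE (i + n)%N).
by rewrite mn !coefXnM ltnNge leq_addl addnK.
Qed.

Lemma prod_coef0_neq0 (r : seq {poly nat}) :
  (forall q, q \in r -> q`_0 <> 0%N) -> (\prod_(q <- r) q)`_0 <> 0%N.
Proof.
move=> r0; apply/eqP; rewrite coef0_prod -lt0n big_seq.
by apply: prodn_cond_gt0 => q /r0 q0; rewrite lt0n; apply/eqP.
Qed.

Definition exponent_mult (a b i : nat) : nat :=
  ((i == 0) + (i == a) + (i == b) + (i == a + b))%N.

Lemma coef_mul_1addXn a b i :
  ((1 + 'X^a) * (1 + 'X^b) : {poly nat})`_i = exponent_mult a b i.
Proof.
rewrite mulrDl !mulrDr !mul1r mulr1 -exprD !coefD !coefXn coef1 /exponent_mult.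
lia.
Qed.

Lemma exponent_mult_leq {a b c d} : (a <= b)%N -> (c <= d)%N ->
  exponent_mult a b =1 exponent_mult c d -> (a <= c)%N.
Proof.
move=> le_ab le_cd E; rewrite leqNgt; apply/negP => lt_ca.
move: (E c); rewrite /exponent_mult eqxx (ltn_eqF lt_ca).
rewrite (ltn_eqF (leq_trans lt_ca le_ab)).
by rewrite (ltn_eqF (leq_trans lt_ca (leq_addr _ _))); lia.
Qed.

Lemma exponent_mult_leq2 {a b d} : (a <= b)%N -> (a <= d)%N ->
  exponent_mult a b =1 exponent_mult a d -> (b <= d)%N.
Proof.
move=> le_ab le_ad E; rewrite leqNgt; apply/negP => lt_db.
move: (E d); rewrite /exponent_mult eqxx (ltn_eqF lt_db).
by rewrite (ltn_eqF (leq_trans lt_db (leq_addl _ _))); lia.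
Qed.

Lemma exponent_mult_inj {a b c d} : (a <= b)%N -> (c <= d)%N ->
  exponent_mult a b =1 exponent_mult c d -> a = c /\ b = d.
Proof.
move=> le_ab le_cd E; have E' i := esym (E i).
have ac : a = c.
  apply/eqP; rewrite eqn_leq (exponent_mult_leq le_ab le_cd E).
  exact: exponent_mult_leq le_cd le_ab E'.
subst c; split=> //; apply/eqP.
rewrite eqn_leq (exponent_mult_leq2 le_ab le_cd E).
exact: exponent_mult_leq2 le_cd le_ab E'.
Qed.

Lemma perm_mul_1addXn a b c d :
  ((1 + 'X^a) * (1 + 'X^b) : {poly nat}) = (1 + 'X^c) * (1 + 'X^d) ->
  perm_eq [:: (1 + 'X^a : {poly nat}); 1 + 'X^b] [:: 1 + 'X^c; 1 + 'X^d].
Proof.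
wlog le_ab : a b / (a <= b)%N.
  move=> W; case: (leqP a b) => [|/ltnW le_ba E]; first exact: W.
  rewrite (perm_catC [:: 1 + 'X^a] [:: 1 + 'X^b]); apply: W le_ba _.
  by rewrite mulrC.
wlog le_cd : c d / (c <= d)%N.
  move=> W; case: (leqP c d) => [|/ltnW le_dc E]; first exact: W.
  rewrite perm_sym (perm_catC [:: 1 + 'X^c] [:: 1 + 'X^d]) perm_sym; apply: W le_dc _.
  by rewrite E mulrC.
move=> E; have E' i : exponent_mult a b i = exponent_mult c d i.
  by rewrite -!coef_mul_1addXn E.
by have [-> ->] := exponent_mult_inj le_ab le_cd E'.
Qed.

Lemma Xfree_prod_horner1_eq4 (r : seq {poly nat}) :
  (forall q, q \in r -> N1_irreducible q /\ q <> 'X) ->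
  (\prod_(q <- r) q).[1%N] = 4%N ->
  (exists A, r = [:: A]) \/ (exists a b, r = [:: 1 + 'X^a; 1 + 'X^b]).
Proof.
move=> irr_r; have ge2 q : q \in r -> (2 <= q.[1%N])%N.
  by move=> /irr_r [irr_q qX]; apply: N1_irreducible_horner1_ge2.
case: r irr_r ge2 => [|A [|B [|C r]]] irr_r ge2;
  rewrite ?big_nil ?horner1_one // !big_cons ?big_nil ?mulr1 ?hornerM.
- by left; exists A.
- have inA : A \in [:: A; B] := mem_head _ _.
  have inB : B \in [:: A; B] by rewrite !inE eqxx orbT.
  have [[irrA AX] [irrB BX]] := (irr_r A inA, irr_r B inB).
  move: (ge2 A inA) (ge2 B inB) => A2 B2 AB4.
  have [A2' B2'] : A.[1%N] = 2%N /\ B.[1%N] = 2%N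
    by move: A2 B2 AB4; move: (A.[1%N]) (B.[1%N]) => x y; nia.
  have [a ->] := N1_irreducible_horner1_eq2 irrA AX A2'.
  have [b ->] := N1_irreducible_horner1_eq2 irrB BX B2'.
  by right; exists a, b.
- move: (ge2 A) (ge2 B) (ge2 C); rewrite !inE !eqxx !orbT.
  move=> /(_ isT) + /(_ isT) + /(_ isT).
  move: (A.[1%N]) (B.[1%N]) (C.[1%N]) ((\prod_(q <- r) q).[1%N]).
  move=> x y z [|w] x2 y2 z2.
    by rewrite !mulr0.
  by have := leq_mul x2 (leq_mul y2 (leq_mul z2 (leqnn w.+1))); lia.
Qed.

Lemma Xfree_prod_perm (r r' : seq {poly nat}) :
  (forall q, q \in r -> N1_irreducible q /\ q <> 'X) ->
  (forall q, q \in r' -> N1_irreducible q /\ q <> 'X) ->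
  \prod_(q <- r) q = \prod_(q <- r') q -> (\prod_(q <- r) q).[1%N] = 4%N ->
  perm_eq r r'.
Proof.
have irr_pair A a b : N1_irreducible A -> A <> (1 + 'X^a) * (1 + 'X^b).
  by move=> [_ [_ irrA]] /irrA [] /one_addXn_neq1.
move=> irr_r irr_r' E r4; have r'4 := r4; rewrite E in r'4.
case: (Xfree_prod_horner1_eq4 r irr_r r4) => [[A ?]|[a [b ?]]];
  case: (Xfree_prod_horner1_eq4 r' irr_r' r'4) => [[A' ?]|[c [d ?]]];
  subst r r'; move: E irr_r irr_r'; rewrite !big_cons !big_nil !mulr1.
- by move=> ->.
- by move=> E /(_ A (mem_head _ _)) [/irr_pair/(_ E)].
- by move=> E _ /(_ A' (mem_head _ _)) [/irr_pair/(_ (esym E))].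
- by move=> E _ _; apply: perm_mul_1addXn.
Qed.

Lemma filter_pred1_nseq (T : eqType) (x : T) (s : seq T) :
  [seq y <- s | y == x] = nseq (count_mem x s) x.
Proof. by elim: s => //= y s IH; case: eqP => [->|] /=; rewrite IH. Qed.

Section Factorisation.

Context {P : {poly nat}} {s : seq {poly nat}}.
Hypothesis fact_s : N1_irr_factorisation P s.

Lemma N1_irr_factorisation_Xfree q :
  q \in [seq q <- s | q != 'X] -> N1_irreducible q /\ q <> 'X.
Proof.
by case: fact_s => irr_s _; rewrite mem_filter => /andP [/eqP qX /irr_s].
Qed.

Lemma N1_irr_factorisation_split :
  P = 'X^(count_mem 'X s) * \prod_(q <- [seq q <- s | q != 'X]) q.
Proof.
case: fact_s => _ <-; rewrite (bigID (pred1 'X)) /= big_filter; congr (_ * _).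
rewrite (eq_bigr (fun=> 'X)); last by move=> q /eqP.
by rewrite big_const_seq iter_mulr_1.
Qed.

Lemma N1_irr_factorisation_Xfree_coef0 :
  (\prod_(q <- [seq q <- s | q != 'X]) q)`_0 <> 0%N.
Proof.
apply: prod_coef0_neq0 => q /N1_irr_factorisation_Xfree [irr_q qX].
exact: N1_irreducible_coef0.
Qed.

End Factorisation.

Theorem mainTheorem8 (P : {poly nat}) :
  P.[1%N] = 4%N ->
  forall s t : seq {poly nat},
    N1_irr_factorisation P s -> N1_irr_factorisation P t -> perm_eq s t.
Proof.
move=> P4 s t fact_s fact_t.
have [count_eq Xfree_eq] := eq_XnM (N1_irr_factorisation_Xfree_coef0 fact_s)
  (N1_irr_factorisation_Xfree_coef0 fact_t)
  (etrans (esym (N1_irr_factorisation_split fact_s))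
          (N1_irr_factorisation_split fact_t)).
have Xfree4 : (\prod_(q <- [seq q <- s | q != 'X]) q).[1%N] = 4%N.
  by rewrite -P4 (N1_irr_factorisation_split fact_s) hornerM hornerXn expr1n mul1r.
rewrite -(perm_filterC (pred1 'X) s) perm_sym -(perm_filterC (pred1 'X) t) perm_sym.
apply: perm_cat; first by rewrite !filter_pred1_nseq count_eq.
exact: Xfree_prod_perm (N1_irr_factorisation_Xfree fact_s)
  (N1_irr_factorisation_Xfree fact_t) Xfree_eq Xfree4.
Qed.
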